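(* Let $\Gamma=(Q,A,E,(\delta_e)_{e\in E})$ be an MEMDP, $q\in Q$, and $W$ a parity objective. Then $$\sup_{\tau\in\mathcal D(\mathrm{Strat}(Q,A))}\mathrm{val}^{\mathrm{uni}}_q(\Gamma,\tau,W)=\mathrm{val}^{\mathrm{uni}}_q(\Gamma,W).$$
   Context: $\mathcal D(X)$ is the set of distributions on $X$ with countable support. An MDP $G=(Q,A,\delta)$ has finite non-empty $Q,A$ and $\delta:Q\times A\to\mathcal D(Q)$; strategies are maps $\sigma:Q\cdot(A\cdot Q)^*\to\mathcal D(A)$, $\mathrm{Strat}(Q,A)$ is their set, and $\mathbb P^\sigma_q[G,\cdot]$ is the induced probability measure on infinite runs from $q$ (infinite state sequences measured by projection). A mixed strategy is $\tau\in\mathcal D(\mathrm{Strat}(Q,A))$ (countable support), with $\mathbb P^\tau_q[G,\cdot]:=\sum_\sigma\tau(\sigma)\mathbb P^\sigma_q[G,\cdot]$. A parity objective given by $f:Q\to\mathbb N$ is the set of infinite state sequences whose maximal label seen infinitely often is even. An MEMDP is $\Gamma=(Q,A,E,(\delta_e)_{e\in E})$ with $E$ finite non-empty and each $\Gamma[e]=(Q,A,\delta_e)$ an MDP. $\mathrm{val}^{\mathrm{uni}}_q(\Gamma,\tau,W)=\min_{e\in E}\mathbb P^\tau_q[\Gamma[e],W]$ and $\mathrm{val}^{\mathrm{uni}}_q(\Gamma,W)=\sup_{\sigma\in\mathrm{Strat}(Q,A)}\min_{e\in E}\mathbb P^\sigma_q[\Gamma[e],W]$. *)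

From HB Require Import structures.
From mathcomp Require Import all_boot all_order all_algebra.
From mathcomp Require Import all_classical all_reals all_analysis.

Set Implicit Arguments.
Unset Strict Implicit.
Unset Printing Implicit Defensive.

Import Order.TTheory GRing.Theory Num.Theory.
Local Open Scope classical_set_scope.
Local Open Scope ring_scope.

(* A distribution on a finite type (countable support is automatic). *)
Definition dist_on (R : realType) (T : finType) (d : T -> R) : Prop :=
  (forall t, 0 <= d t) /\ \sum_(t : T) d t = 1.

(* A transition function delta : Q x A -> D(Q), written curried:
   delta q a q' = probability of moving to q' when playing a in q. *)
Definition is_mdp (R : realType) (Q A : finType) (delta : Q -> A -> Q -> R)
  : Prop := forall q a, dist_on (delta q a).

(* Histories Q.(A.Q)^* : an initial state and a list of (action, state). *)
Definition hist (Q A : finType) : Type := (Q * seq (A * Q))%type.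

Definition hlast (Q A : finType) (h : hist Q A) : Q := last h.1 (map snd h.2).

(* A (behavioural) strategy sigma : Q.(A.Q)^* -> D(A). Raw functions are
   of type [strat], [is_strategy] says each value is a distribution on A. *)
Definition strat (R : realType) (Q A : finType) : Type := hist Q A -> A -> R.

Definition is_strategy (R : realType) (Q A : finType) (sigma : strat R Q A)
  : Prop := forall h, dist_on (sigma h).

(* Probability that, continuing from history h, the next states are
   exactly the list [rest] (actions are summed out). *)
Fixpoint path_prob (R : realType) (Q A : finType) (delta : Q -> A -> Q -> R)
    (sigma : strat R Q A) (h : hist Q A) (rest : seq Q) : R :=
  match rest with
  | [::] => 1
  | q' :: rest' =>
      \sum_(a : A) sigma h a * delta (hlast h) a q' *
                   path_prob delta sigma (h.1, rcons h.2 (a, q')) rest'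
  end.

Definition prefix_prob (R : realType) (Q A : finType) (delta : Q -> A -> Q -> R)
    (sigma : strat R Q A) (q : Q) (p : seq Q) : R :=
  match p with
  | [::] => 1
  | q0 :: rest => (q0 == q)%:R * path_prob delta sigma (q0, [::]) rest
  end.

(* The type of infinite state sequences; the state q only serves to
   make the type pointed (required by the generated sigma-algebra). *)
Definition run (Q : finType) (q : Q) : Type := nat -> Q.

Section run_instances.
Variables (Q : finType) (q : Q).
HB.instance Definition _ := Choice.on (@run Q q).
HB.instance Definition _ := isPointed.Build (@run Q q) (fun _ => q).
End run_instances.

Definition cyl (Q : finType) (q : Q) (p : seq Q) : set (@run Q q) :=
  [set w | forall i, (i < size p)%N -> w i = nth q p i].
Arguments cyl {Q} q p.

Definition cylinders (Q : finType) (q : Q) : set (set (@run Q q)) :=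
  range (@cyl Q q).
Arguments cylinders {Q} q.

Definition runs (Q : finType) (q : Q) := g_sigma_algebraType (cylinders q).

(* P is the probability measure P^sigma_q[G, .] induced by sigma in the MDP
   with transitions delta: it is the (unique) probability measure on the
   cylinder sigma-algebra giving each cylinder its prefix probability. *)
Definition is_induced (R : realType) (Q A : finType) (delta : Q -> A -> Q -> R)
    (sigma : strat R Q A) (q : Q) (P : probability (runs q) R) : Prop :=
  forall p : seq Q, P (cyl q p) = (prefix_prob delta sigma q p)%:E.
Arguments is_induced {R Q A} delta sigma q P.

Definition inf_often (Q : finType) (w : nat -> Q) (x : Q) : Prop :=
  forall N, exists2 n, (N <= n)%N & w n = x.

Definition parity (Q : finType) (q : Q) (f : Q -> nat) : set (@run Q q) :=
  [set w | exists x, [/\ inf_often w x, ~~ odd (f x) &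
                         forall y, inf_often w y -> (f y <= f x)%N]].
Arguments parity {Q} q f.

Definition supp (R : realType) (Q A : finType) (tau : strat R Q A -> R)
  : set (strat R Q A) := [set sigma | tau sigma != 0].

Definition is_mixed (R : realType) (Q A : finType) (tau : strat R Q A -> R)
  : Prop :=
  [/\ forall sigma, 0 <= tau sigma,
      supp tau `<=` [set sigma | is_strategy sigma],
      countable (supp tau) &
      (\esum_(sigma in supp tau) (tau sigma)%:E = 1)%E].

Definition mixed_prob (R : realType) (Q A : finType) (q : Q)
    (P : strat R Q A -> probability (runs q) R) (tau : strat R Q A -> R)
    (W : set (@run Q q)) : \bar R :=
  (\esum_(sigma in supp tau) (tau sigma)%:E * P sigma W)%E.

From HB Require Import structures.
From mathcomp Require Import all_boot all_order all_algebra.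
From mathcomp Require Import all_classical all_reals all_analysis.
From mathcomp Require Import ring.
Import Order.TTheory GRing.Theory Num.Theory.
Set Implicit Arguments.
Unset Strict Implicit.
Unset Printing Implicit Defensive.
Local Open Scope classical_set_scope.
Local Open Scope ring_scope.

(* Pure strategies are Dirac mixed strategies, so only one inequality needs
   work, and it follows from Kuhn's theorem.  A mixed strategy [tau] is
   realised by the behavioural strategy that, after a history [h], plays
   each action with its tau-conditional probability given [h].  This
   strategy depends on [tau] alone, not on the environment, and in every
   environment it gives each cylinder the same probability as [tau]; as the
   cylinders form a pi-system generating the sigma-algebra of runs, the two
   measures agree on the measurable parity objective in all environments
   at once. *)

Lemma esumZl (R : realType) (T : choiceType) (I : set T) (a : T -> \bar R)
    (c : R) : 0 <= c -> (forall i, I i -> 0 <= a i)%E ->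
  (\esum_(i in I) (c%:E * a i) = c%:E * \esum_(i in I) a i)%E.
Proof.
move=> c0 a0; rewrite /esum -ereal_supZl//; last first.
  by apply/set0P; exists 0%E, set0; [exact: fsets_set0|rewrite fsbig_set0].
have distr X : fsets I X ->
    (\sum_(i \in X) c%:E * a i = c%:E * \sum_(i \in X) a i)%E.
  move=> [finX XI]; rewrite !fsbig_finite//= !big_seq ge0_sume_distrr// => i.
  by rewrite in_fset_set// inE => /XI/a0.
congr ereal_sup; apply/seteqP; split => x /=.
  by move=> [X IX <-]; exists (\sum_(i \in X) a i); [exists X|rewrite distr].
by move=> [_ [X IX <-] <-]; exists X => //; rewrite distr.
Qed.

Section mixture.
Context d (T : measurableType d) (R : realType) (I : choiceType) (S : set I)
  (w : I -> R) (m : I -> {measure set T -> \bar R}).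
Hypothesis w_ge0 : forall i, 0 <= w i.

Definition mixture (X : set T) : \bar R := (\esum_(i in S) (w i)%:E * m i X)%E.

Let mixture0 : mixture set0 = 0%E.
Proof. by rewrite /mixture esum1// => i _; rewrite measure0 mule0. Qed.

Let mixture_ge0 X : (0 <= mixture X)%E.
Proof. by apply: esum_ge0 => i _; rewrite mule_ge0 ?lee_fin. Qed.

Let mixture_sigma_additive : semi_sigma_additive mixture.
Proof.
move=> F mF tF mUF.
have wm_ge0 i n : (0 <= (w i)%:E * m i (F n))%E by rewrite mule_ge0 ?lee_fin.
suff -> : mixture (\bigcup_n F n) = (\sum_(n <oo) mixture (F n))%E.
  by apply: is_cvg_ereal_nneg_natsum => n _; exact: mixture_ge0.
rewrite nneseries_esumT // /mixture.
transitivity (\esum_(i in S) \esum_(n in [set: nat]) (w i)%:E * m i (F n))%E.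
  apply: eq_esum => i _.
  by rewrite measure_semi_bigcup // -nneseriesZl // nneseries_esumT.
rewrite esum_esum; last by move=> *.
rewrite (@esum_esum _ _ _ setT (fun _ => S)
  (fun n i => ((w i)%:E * m i (F n))%E)) //.
rewrite (reindex_esum (S `*`` (fun _ => setT)) _ (fun x => (x.2, x.1)))//.
split=> //=.
- by move=> [i j] [/=].
- by move=> [i1 i2] [j1 j2] /= _ _ [] -> ->.
- by move=> [i1 i2] [Si1 Ti2]; exists (i2, i1).
Qed.

HB.instance Definition _ := isMeasure.Build _ _ _ mixture
  mixture0 mixture_ge0 mixture_sigma_additive.

Definition mixture_measure : {measure set T -> \bar R} := mixture.

End mixture.

Section run_measurability.
Context (Q : finType) (q : Q).

Lemma measurable_cyl (p : seq Q) : measurable (cyl q p : set (runs q)).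
Proof. by apply: sub_sigma_algebra; exists p. Qed.

Lemma measurable_state_at n x : measurable [set w : runs q | w n = x].
Proof.
have -> : [set w : runs q | w n = x] =
    \bigcup_(t in [set t : n.+1.-tuple Q | tnth t ord_max = x]) cyl q t.
  apply/seteqP; split => w /=.
    move=> wn; exists [tuple w i | i < n.+1]; first by rewrite /= tnth_mktuple.
    move=> i; rewrite size_tuple => lt_in.
    by rewrite -[i]/(val (Ordinal lt_in)) nth_mktuple.
  by move=> [t <-] wt; rewrite (tnth_nth q) wt ?size_tuple.
apply: fin_bigcup_measurable; first exact: finite_finset.
by move=> t _; exact: measurable_cyl.
Qed.

Lemma measurable_inf_often x : measurable [set w : runs q | inf_often w x].
Proof.
have -> : [set w : runs q | inf_often w x] =
    \bigcap_N \bigcup_(n in [set n | (N <= n)%N]) [set w : runs q | w n = x].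
  apply/seteqP; split => w /= io N.
    by move=> _; have [n Nn wn] := io N; exists n.
  by have [n Nn wn] := io N I; exists n.
apply: bigcapT_measurable => N; apply: bigcup_measurable => n _.
exact: measurable_state_at.
Qed.

Lemma measurable_parity f : measurable (parity q f : set (runs q)).
Proof.
have -> : parity q f = \bigcup_(x in [set x | ~~ odd (f x)])
    ([set w : runs q | inf_often w x] `&`
     \bigcap_(y in [set y | (f x < f y)%N])
       ~` [set w : runs q | inf_often w y]).
  apply/seteqP; split => w /=.
    move=> [x [iox ev max_x]]; exists x => //; split => // y /= fxy ioy.
    by move: (max_x y ioy); rewrite leqNgt fxy.
  move=> [x ev [iox not_io]]; exists x; split => // y ioy.
  by rewrite leqNgt; apply/negP => fxy; exact: not_io y fxy ioy.
apply: fin_bigcup_measurable; first exact: finite_finset.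
move=> x _; apply: measurableI; first exact: measurable_inf_often.
apply: fin_bigcap_measurable; first exact: finite_finset.
by move=> y _; apply: measurableC; exact: measurable_inf_often.
Qed.

End run_measurability.

Section cylinder_uniqueness.
Context (Q : finType) (q : Q) (R : realType).

Definition cylinders0 : set (set (runs q)) := cylinders q `|` [set set0].

Lemma setI_cyl p p' : cylinders0 (cyl q p `&` cyl q p').
Proof.
wlog le_pp' : p p' / (size p <= size p')%N.
  move=> H; case: (leqP (size p) (size p')) => [|/ltnW]; first exact: H.
  by rewrite setIC; exact: H.
have [/forallP pp'|/forallPn[i /eqP neq_i]] :=
  boolP [forall i : 'I_(size p), nth q p i == nth q p' i].
  left; exists p' => //; apply/seteqP; split => w /=; last by case.
  move=> wp'; split => // i ltip; rewrite (eqP (pp' (Ordinal ltip))).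
  by apply: wp'; exact: leq_trans le_pp'.
right; apply/seteqP; split => w //= [wp wp'].
by apply: neq_i; rewrite -wp // -wp' //; exact: leq_trans (ltn_ord i) le_pp'.
Qed.

Lemma setI_closed_cylinders0 : setI_closed cylinders0.
Proof.
move=> _ _ [[p _ <-]|->] [[p' _ <-]|->]; rewrite ?set0I ?setI0; try by right.
exact: setI_cyl.
Qed.

Lemma measurable_runsE : measurable = <<s cylinders0 >>.
Proof.
apply/seteqP; split; first by apply: sub_sigma_algebra2 => A cA; left.
apply: smallest_sub; first exact: sigma_algebra_measurable.
by move=> _ [[p _ <-]|->]; [exact: measurable_cyl|exact: measurable0].
Qed.

Lemma cyl_nil : cyl q [::] = setT.
Proof. by apply/seteqP; split => w //= _ i. Qed.

Lemma measure_eq_cyl (m1 m2 : {measure set (runs q) -> \bar R}) :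
  (m1 setT < +oo)%E -> (forall p, m1 (cyl q p) = m2 (cyl q p)) ->
  forall A, measurable A -> m1 A = m2 A.
Proof.
move=> m1_fin m12 A mA.
apply: (measure_unique cylinders0 (fun=> cyl q [::])) => //.
- exact: measurable_runsE.
- exact: setI_closed_cylinders0.
- by move=> _; left; exists [::].
- by apply/seteqP; split => w // _; exists 0%N.
- by move=> _ [[p _ <-]|->]; rewrite ?measure0.
- by move=> _; rewrite cyl_nil.
Qed.

End cylinder_uniqueness.

Lemma dist_on_le1 (R : realType) (T : finType) (d : T -> R) t :
  dist_on d -> d t <= 1.
Proof. by move=> [d0 <-]; rewrite (bigD1 t) //= lerDl sumr_ge0. Qed.

Section behavioural_strategies.
Context (R : realType) (Q A : finType).
Implicit Types (s : strat R Q A) (h : hist Q A).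

Fixpoint act_prob s h (l : seq (A * Q)) : R :=
  if l is x :: l' then s h x.1 * act_prob s (h.1, rcons h.2 x) l' else 1.

Definition hist_prob s h := act_prob s (h.1, [::]) h.2.

Lemma act_prob_rcons s h l x :
  act_prob s h (rcons l x) = act_prob s h l * s (h.1, h.2 ++ l) x.1.
Proof.
elim: l h => [|y l IH] [q0 l0] /=; first by rewrite cats0 mulr1 mul1r.
by rewrite IH /= cat_rcons mulrA.
Qed.

Lemma hist_prob_rcons s h x :
  hist_prob s (h.1, rcons h.2 x) = hist_prob s h * s h x.1.
Proof. by case: h => q0 l0; rewrite /hist_prob /= act_prob_rcons. Qed.

Lemma hist_prob_bounds s h : is_strategy s -> 0 <= hist_prob s h <= 1.
Proof.
rewrite /hist_prob => hs; elim: h.2 (h.1, [::]) => [|x l IH] h' /=.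
  by rewrite ler01 lexx.
have /andP[p0 p1] := IH (h'.1, rcons h'.2 x).
rewrite mulr_ge0 ?(hs h').1 //= -[1]mulr1 ler_pM ?(hs h').1 //.
exact: dist_on_le1.
Qed.

Lemma path_prob_ge0 (delta : Q -> A -> Q -> R) s h rest :
  (forall q a q', 0 <= delta q a q') -> (forall h a, 0 <= s h a) ->
  0 <= path_prob delta s h rest.
Proof.
move=> delta0 s0; elim: rest h => [|x rest IH] h /=; first exact: ler01.
by apply: sumr_ge0 => a _; rewrite !mulr_ge0.
Qed.

End behavioural_strategies.

Section kuhn.
Context (R : realType) (Q A : finType) (tau : strat R Q A -> R).
Hypothesis tau_mixed : is_mixed tau.
Implicit Types (s : strat R Q A) (h : hist Q A).
Local Notation S := (supp tau).

Let tau_ge0 s : 0 <= tau s. Proof. by case: tau_mixed. Qed.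
Let supp_strat s : S s -> is_strategy s.
Proof. by case: tau_mixed => _ + _ _; apply. Qed.
Let esum_tau : (\esum_(s in S) (tau s)%:E = 1)%E.
Proof. by case: tau_mixed. Qed.

Let weight_ge0 s h : S s -> 0 <= tau s * hist_prob s h.
Proof.
by move=> /supp_strat/(hist_prob_bounds h)/andP[+ _]; exact: mulr_ge0.
Qed.

Let weight_act_ge0 s h a : S s -> 0 <= tau s * hist_prob s h * s h a.
Proof. by move=> Ss; rewrite mulr_ge0 ?weight_ge0 ?(supp_strat Ss h).1. Qed.

Definition mix_hist_prob h : \bar R :=
  \esum_(s in S) (tau s * hist_prob s h)%:E.

Definition mix_act_prob h a : \bar R :=
  \esum_(s in S) (tau s * hist_prob s h * s h a)%:E.

Lemma mix_hist_prob_ge0 h : (0 <= mix_hist_prob h)%E.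
Proof. by apply: esum_ge0 => s Ss; rewrite lee_fin weight_ge0. Qed.

Lemma mix_hist_prob_le1 h : (mix_hist_prob h <= 1)%E.
Proof.
rewrite -esum_tau; apply: le_esum => s Ss; rewrite lee_fin ler_piMr //.
by case/andP: (hist_prob_bounds h (supp_strat Ss)).
Qed.

Lemma mix_act_prob_ge0 h a : (0 <= mix_act_prob h a)%E.
Proof. by apply: esum_ge0 => s Ss; rewrite lee_fin weight_act_ge0. Qed.

Lemma mix_act_prob_le h a : (mix_act_prob h a <= mix_hist_prob h)%E.
Proof.
apply: le_esum => s Ss; rewrite lee_fin ler_piMr ?weight_ge0 //.
exact: dist_on_le1 (supp_strat Ss h).
Qed.

Lemma mix_hist_prob_fin h : mix_hist_prob h \is a fin_num.
Proof.
rewrite ge0_fin_numE ?mix_hist_prob_ge0 //.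
exact: le_lt_trans (mix_hist_prob_le1 h) (ltry _).
Qed.

Lemma mix_act_prob_fin h a : mix_act_prob h a \is a fin_num.
Proof.
rewrite ge0_fin_numE ?mix_act_prob_ge0 //.
apply: le_lt_trans (mix_act_prob_le h a) _.
exact: le_lt_trans (mix_hist_prob_le1 h) (ltry _).
Qed.

Lemma sum_mix_act_prob h : (\sum_(a : A) mix_act_prob h a = mix_hist_prob h)%E.
Proof.
rewrite /mix_act_prob -esum_sum; last first.
  by move=> s a Ss _; rewrite lee_fin weight_act_ge0.
apply: eq_esum => s Ss; rewrite sumEFin -mulr_sumr.
by rewrite (supp_strat Ss h).2 mulr1.
Qed.

(* Kuhn's behavioural strategy: the tau-conditional probability of each
   action given the history, uniform on histories of tau-probability 0. *)
Definition kuhn_strat : strat R Q A := fun h a =>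
  let D := fine (mix_hist_prob h) in
  if D == 0 then #|A|%:R^-1 else fine (mix_act_prob h a) / D.

Lemma mix_hist_probM_kuhn_strat h a :
  (mix_hist_prob h * (kuhn_strat h a)%:E = mix_act_prob h a)%E.
Proof.
have D_E : mix_hist_prob h = (fine (mix_hist_prob h))%:E.
  by rewrite fineK ?mix_hist_prob_fin.
rewrite /kuhn_strat /=; case: ifPn => [/eqP D0|D_neq0].
  have D0E : mix_hist_prob h = 0%E by rewrite D_E D0.
  rewrite D0E mul0e; apply/esym/eqP; rewrite eq_le mix_act_prob_ge0 andbT.
  by rewrite -D0E mix_act_prob_le.
by rewrite D_E -EFinM mulrC divfK // fineK ?mix_act_prob_fin.
Qed.

Hypothesis A_gt0 : (0 < #|A|)%N.

Lemma kuhn_strat_is_strategy : is_strategy kuhn_strat.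
Proof.
move=> h; rewrite /kuhn_strat /=.
have [D0|D_neq0] := eqVneq (fine (mix_hist_prob h)) 0; split.
- by move=> a; rewrite invr_ge0.
- by rewrite sumr_const -[X in X = 1]mulr_natr mulVf // pnatr_eq0 -lt0n.
- by move=> a; rewrite divr_ge0 // fine_ge0 ?mix_act_prob_ge0 ?mix_hist_prob_ge0.
- have sum_fine : (\sum_a fine (mix_act_prob h a))%:E = mix_hist_prob h.
    rewrite -sumEFin -sum_mix_act_prob; apply: eq_bigr => a _.
    by rewrite fineK ?mix_act_prob_fin.
  by move: D_neq0; rewrite -mulr_suml -sum_fine /= => ?; rewrite divff.
Qed.

Variable delta : Q -> A -> Q -> R.
Hypothesis delta_ge0 : forall q a q', 0 <= delta q a q'.

Let weight_path_ge0 s h rest :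
  S s -> 0 <= tau s * hist_prob s h * path_prob delta s h rest.
Proof.
move=> Ss; rewrite mulr_ge0 ?weight_ge0 // path_prob_ge0 // => h' a.
exact: (supp_strat Ss h').1.
Qed.

(* Each step of [kuhn_strat] turns the tau-weight of a history into the
   tau-weight of its one-step extension (mix_hist_probM_kuhn_strat). *)
Lemma path_prob_kuhn_strat rest h :
  (mix_hist_prob h * (path_prob delta kuhn_strat h rest)%:E =
   \esum_(s in S) (tau s * hist_prob s h * path_prob delta s h rest)%:E)%E.
Proof.
elim: rest h => [|q' rest IH] h /=.
  by rewrite mule1; apply: eq_esum => s _; rewrite mulr1.
pose h' a := (h.1, rcons h.2 (a, q')).
have kuhn_ge0 h0 a : 0 <= kuhn_strat h0 a.
  exact: (kuhn_strat_is_strategy h0).1.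
have extend a : mix_act_prob h a = mix_hist_prob (h' a).
  by apply: eq_esum => s _; rewrite /h' hist_prob_rcons /= mulrA.
transitivity (\sum_(a : A) (delta (hlast h) a q')%:E * \esum_(s in S)
    (tau s * hist_prob s (h' a) * path_prob delta s (h' a) rest)%:E)%E.
  rewrite -sumEFin ge0_sume_distrr; last first.
    by move=> a _; rewrite lee_fin !mulr_ge0 // path_prob_ge0.
  apply: eq_bigr => a _.
  rewrite -IH !EFinM !muleA mix_hist_probM_kuhn_strat extend.
  by rewrite (muleC (mix_hist_prob _)) -muleA.
under eq_bigr do [rewrite -esumZl ?lee_fin //;
                  last by move=> s Ss; rewrite lee_fin weight_path_ge0].
rewrite -esum_sum; last first.
  by move=> s a Ss _; rewrite lee_fin mulr_ge0 ?weight_path_ge0.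
apply: eq_esum => s Ss; rewrite sumEFin mulr_sumr; congr EFin.
by apply: eq_bigr => a _; rewrite /h' hist_prob_rcons /=; ring.
Qed.

Lemma prefix_prob_kuhn_strat q p :
  (prefix_prob delta kuhn_strat q p)%:E =
  \esum_(s in S) (tau s * prefix_prob delta s q p)%:E.
Proof.
case: p => [|q0 rest] /=.
  by rewrite -esum_tau; apply: eq_esum => s _; rewrite mulr1.
have mix_init : mix_hist_prob (q0, [::]) = 1%E.
  by rewrite -esum_tau; apply: eq_esum => s _; rewrite /hist_prob /= mulr1.
rewrite EFinM -[(path_prob _ _ _ _)%:E]mul1e -mix_init path_prob_kuhn_strat.
rewrite -esumZl ?lee_fin //; last first.
  by move=> s Ss; rewrite lee_fin weight_path_ge0.
by apply: eq_esum => s _; rewrite -EFinM /hist_prob /= mulr1 mulrCA.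
Qed.

End kuhn.

Lemma mixed_prob_kuhn_strat (R : realType) (Q A : finType)
    (A_gt0 : (0 < #|A|)%N) (delta : Q -> A -> Q -> R)
    (delta_mdp : is_mdp delta) (q : Q)
    (P : strat R Q A -> probability (runs q) R)
    (P_induced : forall s, is_strategy s -> is_induced delta s q (P s))
    (tau : strat R Q A -> R) (tau_mixed : is_mixed tau) (W : set (runs q)) :
  measurable W -> mixed_prob P tau W = P (kuhn_strat tau) W.
Proof.
have tau_ge0 : forall s, 0 <= tau s by case: tau_mixed.
have supp_strat : forall s, supp tau s -> is_strategy s by case: tau_mixed.
have delta_ge0 q0 a q' : 0 <= delta q0 a q' by exact: (delta_mdp q0 a).1.
have kuhn_strategy := kuhn_strat_is_strategy tau_mixed A_gt0.
move=> mW.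
change (mixture_measure (supp tau) (fun s => P s) tau_ge0 W =
        P (kuhn_strat tau) W).
apply/esym/measure_eq_cyl => //.
  exact: le_lt_trans (probability_le1 _ measurableT) (ltry _).
move=> p; transitivity (prefix_prob delta (kuhn_strat tau) q p)%:E.
  exact: P_induced.
rewrite prefix_prob_kuhn_strat //; apply: eq_esum => s Ss; rewrite EFinM.
by congr (_ * _)%E; symmetry; exact: P_induced (supp_strat _ Ss) p.
Qed.

Section pure_mixed.
Context (R : realType) (Q A : finType) (s : strat R Q A).

Definition pure_mixed : strat R Q A -> R := fun t => (`[< t = s >])%:R.

Lemma supp_pure_mixed : supp pure_mixed = [set s].
Proof.
apply/seteqP; split => t; rewrite /supp /pure_mixed /=.
  by case: asboolP => // _; rewrite eqxx.
by move=> ->; rewrite asboolT // oner_neq0.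
Qed.

Lemma pure_mixed_is_mixed : is_strategy s -> is_mixed pure_mixed.
Proof.
move=> s_strat; split; rewrite ?supp_pure_mixed.
- by move=> t; rewrite ler0n.
- by move=> _ ->.
- exact/finite_set_countable/finite_set1.
- by rewrite esum_set1 /pure_mixed ?asboolT.
Qed.

Lemma mixed_prob_pure_mixed (q : Q) (P : strat R Q A -> probability (runs q) R)
    (W : set (runs q)) : mixed_prob P pure_mixed W = P s W.
Proof.
by rewrite /mixed_prob supp_pure_mixed esum_set1 /pure_mixed ?asboolT ?mul1e.
Qed.

End pure_mixed.

Theorem mainTheorem7 (R : realType) (Q A E : finType)
  (hA : (0 < #|A|)%N) (hE : (0 < #|E|)%N)
  (delta : E -> Q -> A -> Q -> R) (hdelta : forall e, is_mdp (delta e))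
  (q : Q) (f : Q -> nat)
  (P : E -> strat R Q A -> probability (runs q) R)
  (hP : forall e sigma, is_strategy sigma -> is_induced (delta e) sigma q (P e sigma)) :
  ereal_sup [set \big[Order.min/+oo%E]_(e : E) mixed_prob (P e) tau (parity q f)
            | tau in [set tau | is_mixed tau]]
  = ereal_sup [set \big[Order.min/+oo%E]_(e : E) P e sigma (parity q f)
            | sigma in [set sigma | is_strategy sigma]].
Proof.
apply/eqP; rewrite eq_le; apply/andP; split.
  apply: ge_ereal_sup => _ [tau tau_mixed <-]; apply: ereal_sup_ubound.
  exists (kuhn_strat tau); first exact: kuhn_strat_is_strategy.
  apply: eq_bigr => e _.
  by rewrite (mixed_prob_kuhn_strat hA (hdelta e) (hP e) tau_mixed
                                    (measurable_parity f)).
apply: ge_ereal_sup => _ [s s_strat <-]; apply: ereal_sup_ubound.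
exists (pure_mixed s); first exact: pure_mixed_is_mixed.
by apply: eq_bigr => e _; rewrite mixed_prob_pure_mixed.
Qed.
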